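(* Let $s\ge 3$ and let $\kappa_s$ be the partition with $\beta(\kappa_s)=T_s$. Then $\kappa_s$ is an $(s,s+1,s+2)$-core partition of maximum size. If $s$ is even, $\kappa_s$ is the unique $(s,s+1,s+2)$-core partition of maximum size, and it is self-conjugate. If $s$ is odd, then $\kappa_s\ne\kappa_s'$ and $\kappa_s,\kappa_s'$ are exactly the two $(s,s+1,s+2)$-core partitions of maximum size, where $\kappa_s'$ denotes the conjugate partition.
   Context: An $(s,s+1,s+2)$-core is a partition with no hook length divisible by $s$, $s+1$ or $s+2$. The $\beta$-set $\beta(\lambda)$ is the set of hook lengths of the first-column boxes of $\lambda$; a partition is determined by its $\beta$-set. $T_s$ is the set of positive integers not expressible as $k_1s+k_2(s+1)+k_3(s+2)$ with $k_1,k_2,k_3$ nonnegative integers. *)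

(* Integer partitions as weakly decreasing sequences of
   positive naturals (parts listed largest first). *)
From mathcomp Require Import all_boot.
Set Implicit Arguments. Unset Strict Implicit. Unset Printing Implicit Defensive.

Definition is_partition (la : seq nat) : bool :=
  sorted geq la && all (fun x => 0 < x) la.

Definition psize (la : seq nat) : nat := sumn la.

(* lambda'_j : length of column j (0-indexed) *)
Definition col_len (la : seq nat) (j : nat) : nat := count (fun x => j < x) la.

Definition conj_part (la : seq nat) : seq nat :=
  mkseq (col_len la) (head 0 la).

(* hook length of the box in row i, column j (0-indexed), j < lambda_i *)
Definition hook (la : seq nat) (i j : nat) : nat :=
  (nth 0 la i - j) + (col_len la j - i) - 1.

Definition hooks (la : seq nat) : seq nat :=
  [seq hook la i j | i <- iota 0 (size la), j <- iota 0 (nth 0 la i)].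

Definition beta (la : seq nat) : seq nat :=
  [seq hook la i 0 | i <- iota 0 (size la)].

Definition is_core3 (s : nat) (la : seq nat) : bool :=
  is_partition la &&
  all (fun h => ~~ (s %| h) && ~~ (s.+1 %| h) && ~~ (s.+2 %| h)) (hooks la).

Definition in_T (s n : nat) : Prop :=
  0 < n /\ ~ (exists k1 k2 k3 : nat, n = k1 * s + k2 * s.+1 + k3 * s.+2).

From mathcomp Require Import all_boot zify.

Set Implicit Arguments. Unset Strict Implicit. Unset Printing Implicit Defensive.

(* Write n = m (s + 2) + j with 0 <= j < s + 2.  Then T_s consists of the n
   with 0 <= m <= M := (s - 2) / 2 and 1 <= j <= L_m := s - 1 - 2 m, and the
   hooks of a partition are the differences b - c with b in its beta-set X and
   c < b not in X.  Hence the beta-set X of an (s, s + 1, s + 2)-core is closed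
   under subtracting s, s + 1 and s + 2, and so lies in T_s; conversely kappa_s
   is a core, since an element of T_s minus a smaller non-element is never a
   multiple of s, s + 1 or s + 2.

   Since 2 |lambda| = 2 sum(X) - |X| (|X| - 1), it remains to maximise this
   quantity.  Let X have n_m elements on level m.  Closure gives
   n_(m-1) >= n_m + 2 whenever n_m > 0, and on each level X sums to at most
   its n_m largest possible elements.  For the deficits b_m = L_m - n_m, which
   are nondecreasing over the nonempty levels, the bound 2 |lambda| <=
   2 |kappa_s| becomes a quadratic inequality that follows from Chebyshev's
   sum inequality and AM-GM.  Equality forces b = 0, i.e. X = T_s, or, for odd
   s, b = 1, i.e. X is T_s without the lowest element of each level; as the
   conjugate of kappa_s is also a maximal core, different from kappa_s when s
   is odd, it is this second maximiser. *)

(** * Sums and counts over integer ranges *)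

Lemma leq_sum_nat m n (F G : nat -> nat) :
  (forall i, m <= i < n -> F i <= G i) ->
  \sum_(m <= i < n) F i <= \sum_(m <= i < n) G i.
Proof. by move=> h; rewrite big_nat [X in _ <= X]big_nat; apply: leq_sum. Qed.

Lemma leq_sum_term m K (F : nat -> nat) : m < K -> F m <= \sum_(0 <= i < K) F i.
Proof.
move=> h; rewrite (big_cat_nat (leq0n m) (ltnW h)) /= [X in _ + X]big_ltn //.
by rewrite addnCA leq_addr.
Qed.

Lemma double_sum_id K : 2 * \sum_(0 <= m < K) m = K * K.-1.
Proof.
elim: K => [|K IH]; first by rewrite big_geq.
by rewrite big_nat_recr //= mulnDr IH; case: K {IH} => //= K; nia.
Qed.

Lemma amgm4 x y : 4 * x * y <= 4 * (x * x) + y * y.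
Proof.
have [h|h] := leqP y (2 * x).
- have [d hd] : exists d, 2 * x = y + d by exists (2 * x - y); lia.
  have -> : 4 * x * y = 2 * (2 * x) * y by lia.
  have -> : 4 * (x * x) = (2 * x) * (2 * x) by lia.
  by rewrite hd; nia.
- have [d ->] : exists d, y = 2 * x + d by exists (y - 2 * x); lia.
  nia.
Qed.

Lemma chebyshev_sum N (g b : nat -> nat) :
  (forall i j, i <= j -> j < N -> g i <= g j) ->
  (forall i j, i <= j -> j < N -> b i <= b j) ->
  (\sum_(0 <= i < N) g i) * (\sum_(0 <= i < N) b i) <= N * \sum_(0 <= i < N) g i * b i.
Proof.
elim: N => [|N IH] hg hb; first by rewrite !big_geq.
have IH' := IH (fun i j h1 h2 => hg i j h1 (ltnW h2)) (fun i j h1 h2 => hb i j h1 (ltnW h2)).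
rewrite !big_nat_recr //=.
have key : \sum_(0 <= i < N) (g N * b i + g i * b N) <=
           \sum_(0 <= i < N) (g i * b i + g N * b N).
  apply: leq_sum_nat => i hi.
  have h1 := hg i N ltac:(lia) ltac:(lia); have h2 := hb i N ltac:(lia) ltac:(lia).
  nia.
move: key; rewrite !big_split /= -!big_distrr -!big_distrl /= sum_nat_const_nat subn0.
set G := \sum_(0 <= i < N) g i; set B := \sum_(0 <= i < N) b i.
set GB := \sum_(0 <= i < N) g i * b i.
by move=> key; nia.
Qed.

Lemma count_iota_prefix n (p : pred nat) :
  (forall k k', k <= k' -> k' < n -> p k' -> p k) ->
  forall k, k < n -> (k < count p (iota 0 n)) = p k.
Proof.
elim: n => [|n IH] H k hk //.
rewrite -[n.+1]addn1 iotaD count_cat /= addn0 add0n.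
case hpn: (p n).
- have hall j : j < n -> p j by move=> hj; apply: (H j n) => //; lia.
  have -> : count p (iota 0 n) = n.
    rewrite (@eq_in_count _ p predT) ?count_predT ?size_iota //.
    by move=> j; rewrite mem_iota => hj; apply: hall; lia.
  rewrite addn1 ltnS; apply/esym; have [hkn|hkn] := ltnP k n; first by rewrite hall.
  by have -> : k = n by [lia]; rewrite hpn leqnn.
- rewrite addn0; have [hkn|hkn] := ltnP k n.
    by apply: IH => // k0 k1 h1 h2; apply: H => //; lia.
  have -> : k = n by lia.
  by rewrite hpn; apply/negbTE; rewrite -leqNgt -{2}(size_iota 0 n) count_size.
Qed.

Lemma muln_pred x : x * x.-1 = x * x - x.
Proof. by rewrite -subn1 mulnBr muln1. Qed.

Lemma leq_square x : x <= x * x.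
Proof. by case: x => // x; rewrite leq_pmull. Qed.

Lemma big_nat_eq0 m n (F : nat -> nat) : (forall i, m <= i < n -> F i = 0) ->
  \sum_(m <= i < n) F i = 0.
Proof. by move=> h; rewrite big_nat big1. Qed.

Lemma leq_sum_nat_eq m n (F G : nat -> nat) :
  (forall i, m <= i < n -> F i <= G i) -> \sum_(m <= i < n) F i = \sum_(m <= i < n) G i ->
  forall i, m <= i < n -> F i = G i.
Proof.
move=> hle heq i /andP [hmi hin].
move: heq; rewrite !(big_cat_nat hmi (ltnW hin)) !(big_ltn hin) /=.
have h1 : \sum_(m <= k < i) F k <= \sum_(m <= k < i) G k.
  by apply: leq_sum_nat => k hk; apply: hle; lia.
have h2 : \sum_(i.+1 <= k < n) F k <= \sum_(i.+1 <= k < n) G k.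
  by apply: leq_sum_nat => k hk; apply: hle; lia.
by have := hle i ltac:(lia); lia.
Qed.

Lemma count_lt_iota r h : r <= h -> count (fun i => i < r) (iota 0 h) = r.
Proof.
move=> hr; rewrite -(subnKC hr) iotaD count_cat.
rewrite (@eq_in_count _ _ predT) ?count_predT ?size_iota; last first.
  by move=> k; rewrite mem_iota => hk /=; lia.
rewrite (@eq_in_count _ _ pred0) ?count_pred0 ?addn0 //.
by move=> k; rewrite mem_iota => hk /=; lia.
Qed.

(** * Beta-sets and hooks *)

Lemma sorted_gtn_gap (b : seq nat) i j : sorted gtn b -> i <= j -> j < size b ->
  nth 0 b j + (j - i) <= nth 0 b i.
Proof.
move=> hs; elim: j => [|j IH] hij hj; first by have -> : i = 0 by [lia]; rewrite addn0.
have [h|h] := ltnP i j.+1; last by have -> : i = j.+1 by [lia]; rewrite subnn addn0.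
have := IH ltac:(lia) ltac:(lia); move/(sortedP 0): hs => /(_ j hj) /=; lia.
Qed.

Section BetaSet.
Variable la : seq nat.
Hypothesis hla : is_partition la.
Local Notation n := (size la).
Local Notation l i := (nth 0 la i).

Lemma part_nth_mono i j : i <= j -> l j <= l i.
Proof.
move=> hij; case: (ltnP j n) => hj; last by rewrite nth_default.
move/andP: hla => [hs _].
have := @sorted_leq_nth _ geq (fun y x z h1 h2 => leq_trans h2 h1) (@leqnn) 0 la hs i.
by apply => //; rewrite inE; lia.
Qed.

Lemma part_nth_pos i : i < n -> 0 < l i.
Proof. by move=> hi; move/andP: hla => [_ /allP]; apply; apply: mem_nth. Qed.

Lemma col_len_nth j : col_len la j = count (fun k => j < l k) (iota 0 n).
Proof. by rewrite /col_len -{1}(mkseq_nth 0 la) /mkseq count_map. Qed.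

Lemma col_len_le j : col_len la j <= n.
Proof. by rewrite /col_len count_size. Qed.

Lemma col_len_lt j k : (k < col_len la j) = (j < l k).
Proof.
case: (ltnP k n) => hk.
  rewrite col_len_nth; apply: (count_iota_prefix (p := fun k => j < l k)) => // a b hab _ h.
  exact: leq_trans h (part_nth_mono hab).
rewrite nth_default //; apply/negbTE; rewrite -leqNgt.
exact: leq_trans (col_len_le j) hk.
Qed.

Lemma col_len0 : col_len la 0 = n.
Proof.
rewrite col_len_nth (@eq_in_count _ _ predT) ?count_predT ?size_iota //.
by move=> k; rewrite mem_iota => hk; apply: part_nth_pos; lia.
Qed.

Definition fhook i := l i + (n - i) - 1.

Lemma hook_col0 i : i < n -> hook la i 0 = fhook i.
Proof. by move=> hi; rewrite /hook /fhook subn0 col_len0. Qed.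

Lemma beta_eq : beta la = [seq fhook i | i <- iota 0 n].
Proof. by apply/eq_in_map => i; rewrite mem_iota => hi; apply: hook_col0; lia. Qed.

Lemma size_beta : size (beta la) = n.
Proof. by rewrite /beta size_map size_iota. Qed.

Lemma nth_beta i : i < n -> nth 0 (beta la) i = fhook i.
Proof. by move=> hi; rewrite beta_eq (nth_map 0) ?size_iota // nth_iota. Qed.

Lemma fhook_ge i : i < n -> n - i <= fhook i.
Proof. move=> hi; have := part_nth_pos hi; rewrite /fhook; lia. Qed.

Lemma fhook_dec i j : i <= j -> j < n -> fhook j + (j - i) <= fhook i.
Proof. move=> hij hj; have := part_nth_mono hij; have := part_nth_pos hj; rewrite /fhook; lia. Qed.

Lemma mem_betaP c : reflect (exists2 i, i < n & c = fhook i) (c \in beta la).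
Proof.
rewrite beta_eq; apply: (iffP mapP) => [[i hi ->]|[i hi ->]]; exists i => //.
  by move: hi; rewrite mem_iota; lia.
by rewrite mem_iota; lia.
Qed.

Lemma beta_pos c : c \in beta la -> 0 < c.
Proof. by case/mem_betaP => i hi ->; have := fhook_ge hi; lia. Qed.

Lemma mem_hooks h : reflect (exists i j, [/\ i < n, j < l i & h = hook la i j]) (h \in hooks la).
Proof.
apply: (iffP allpairsPdep) => [[i [j [hi hj ->]]]|[i [j [hi hj ->]]]].
  by exists i, j; rewrite mem_iota in hi; rewrite mem_iota in hj; split => //; lia.
by exists i, j; rewrite !mem_iota; split => //; lia.
Qed.

Lemma hook_beta_gap h : h \in hooks la ->
  exists i c, [/\ i < n, c < fhook i, c \notin beta la & h = fhook i - c].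
Proof.
case/mem_hooks => i [j [hi hj ->]].
set r := col_len la j.
have hir : i < r by rewrite col_len_lt.
have hrn : r <= n := col_len_le j.
exists i, (j + n - r); split => //.
- have := fhook_ge hi; rewrite /fhook; lia.
- apply/mem_betaP => [[k hk he]].
  case: (ltnP k r) => hkr.
  + have : j < l k by rewrite -col_len_lt.
    move: he; rewrite /fhook; lia.
  + have : ~~ (j < l k) by rewrite -col_len_lt -leqNgt.
    move: he; rewrite /fhook; lia.
- rewrite /hook /fhook -/r; lia.
Qed.

Section Gap.
Variable c : nat.
Hypothesis c_gap : c \notin beta la.

Let r := count (fun k => c < fhook k) (iota 0 n).

Lemma gap_count k : k < n -> (k < r) = (c < fhook k).
Proof.
apply: count_iota_prefix => k1 k2 h12 h2 h; have := fhook_dec h12 h2; lia.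
Qed.

Lemma gap_count_le : r <= n.
Proof. by rewrite -[n](size_iota 0) count_size. Qed.

Lemma gap_col_len : n - r <= c /\ col_len la (c - (n - r)) = r.
Proof.
have hrn := gap_count_le.
have hne k : k < n -> c != fhook k.
  by move=> hk; apply: contra c_gap => /eqP ->; apply/mem_betaP; exists k.
have below_r : r < n -> fhook r < c.
  move=> hr; have := gap_count hr; rewrite ltnn => /esym /negbT.
  by have := hne r hr; lia.
have hcr : n - r <= c.
  by have [hr|hr] := ltnP r n; [have := below_r hr; have := fhook_ge hr; lia | lia].
split=> //; rewrite col_len_nth; apply: etrans (count_lt_iota hrn); apply: eq_in_count => k.
rewrite mem_iota => hk /=; have [hkr|hkr] := ltnP k r.
  have hr1 : r.-1 < n by lia.
  have := gap_count hr1; rewrite ltn_predL (leq_ltn_trans _ hkr) // => /esym hc.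
  by have := fhook_dec (_ : k <= r.-1) hr1; rewrite /fhook in hc *; lia.
have := below_r (leq_ltn_trans hkr (_ : k < n)); have := fhook_dec hkr (_ : k < n).
by rewrite /fhook; lia.
Qed.

Lemma beta_gap_hook i : i < n -> c < fhook i -> fhook i - c \in hooks la.
Proof.
move=> hi hc; have [hcr hcol] := gap_col_len.
have hir : i < r by rewrite gap_count.
have hj : c - (n - r) < l i by rewrite -col_len_lt hcol.
apply/mem_hooks; exists i, (c - (n - r)); split => //.
by rewrite /hook hcol; move: hj hc gap_count_le; rewrite /fhook; lia.
Qed.

End Gap.

Lemma psize_beta : 2 * psize la + n * n.-1 = 2 * sumn (beta la).
Proof.
have e0 : sumn la = \sum_(i <- iota 0 n) l i.
  by rewrite -[in LHS](mkseq_nth 0 la) sumnE big_map.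
rewrite beta_eq /psize e0 sumnE big_map.
have e1 : \sum_(i <- iota 0 n) fhook i = \sum_(i <- iota 0 n) l i + \sum_(0 <= i < n) (n - i - 1).
  rewrite /index_iota subn0 -big_split /=; apply: eq_big_seq => i; rewrite mem_iota => hi.
  have := part_nth_pos (_ : i < n); rewrite /fhook; lia.
rewrite e1 mulnDr; congr (_ + _).
rewrite (big_nat_rev _ 0) /= add0n -double_sum_id.
congr (_ * _); apply: eq_big_nat => i hi; lia.
Qed.

Lemma beta_sorted : sorted gtn (beta la).
Proof.
apply/(sortedP 0) => i hi; rewrite size_beta in hi.
rewrite !nth_beta //; last lia.
have := fhook_dec (leqnSn i) hi; rewrite /gtn /=; lia.
Qed.

End BetaSet.

Lemma beta_inj la mu : is_partition la -> is_partition mu -> beta la =i beta mu -> la = mu.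
Proof.
move=> hla hmu he.
have hb := irr_sorted_eq (leT := gtn) (fun a b c h1 h2 => ltn_trans h2 h1) (fun x => ltnn x)
   (beta_sorted hla) (beta_sorted hmu) he.
have hs : size la = size mu by rewrite -(size_beta la) -(size_beta mu) hb.
apply: (eq_from_nth (x0 := 0) hs) => i hi.
have := nth_beta hla hi; rewrite hb nth_beta // -?hs //.
rewrite /fhook -hs; have := part_nth_pos hla hi; have := part_nth_pos hmu (_ : i < size mu); lia.
Qed.

Lemma beta_exists (b : seq nat) : sorted gtn b -> all (fun x => 0 < x) b ->
  exists la, is_partition la /\ beta la = b.
Proof.
move=> hs hpos; set n := size b.
have hge i : i < n -> n - i <= nth 0 b i.
  move=> hi; have hlast : 0 < nth 0 b n.-1 by apply: (allP hpos); apply: mem_nth; rewrite -/n; lia.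
  by have := sorted_gtn_gap hs (_ : i <= n.-1) (_ : n.-1 < n); lia.
set la := [seq nth 0 b i - (n - 1 - i) | i <- iota 0 n].
have hsz : size la = n by rewrite size_map size_iota.
have hnth i : i < n -> nth 0 la i = nth 0 b i - (n - 1 - i).
  by move=> hi; rewrite (nth_map 0) ?size_iota // nth_iota.
have hpart : is_partition la.
  apply/andP; split.
    apply/(sortedP 0) => i; rewrite hsz => hi; rewrite !hnth ?(ltnW hi) //.
    by have := sorted_gtn_gap hs (leqnSn i) hi; have := hge i.+1 hi; rewrite /geq /=; lia.
  apply/allP => x /(nthP 0) [i]; rewrite hsz => hi <-; rewrite hnth //.
  by have := hge i hi; lia.
exists la; split => //; apply: (eq_from_nth (x0 := 0)); first by rewrite size_beta hsz.
move=> i; rewrite size_beta => hi; have hin : i < n by rewrite -hsz.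
by rewrite (nth_beta hpart hi) /fhook hsz (hnth i hin); have := hge i hin; lia.
Qed.

Section Conj.
Variable la : seq nat.
Hypothesis hla : is_partition la.
Local Notation l i := (nth 0 la i).

Lemma size_conj : size (conj_part la) = head 0 la.
Proof. by rewrite size_mkseq. Qed.

Lemma nth_conj i : i < head 0 la -> nth 0 (conj_part la) i = col_len la i.
Proof. by move=> hi; rewrite nth_mkseq. Qed.

Lemma conj_partition : is_partition (conj_part la).
Proof.
apply/andP; split.
  rewrite /conj_part /mkseq; apply: (@homo_sorted _ _ _ leq geq) (iota_sorted 0 _).
  move=> x y hxy; rewrite /geq /col_len; apply: sub_count => z /=.
  exact: leq_ltn_trans.
apply/allP => x /mapP [j]; rewrite mem_iota => hj ->.
by rewrite (col_len_lt hla) nth0; lia.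
Qed.

Lemma col_len_conj j : j < size la -> col_len (conj_part la) j = l j.
Proof.
move=> hj; rewrite /col_len /conj_part /mkseq count_map.
rewrite (@eq_in_count _ _ (fun i => i < l j)); last first.
  by move=> i _ /=; rewrite (col_len_lt hla).
apply: count_lt_iota; rewrite -nth0; exact: part_nth_mono.
Qed.

Lemma hooks_conj h : h \in hooks (conj_part la) -> h \in hooks la.
Proof.
case/(mem_hooks) => i [j [hi hj ->]].
rewrite size_conj in hi; rewrite nth_conj // in hj.
have hji : i < l j by rewrite -(col_len_lt hla).
have hjn : j < size la := leq_trans hj (col_len_le la i).
apply/mem_hooks; exists j, i; split => //.
by rewrite /hook nth_conj // col_len_conj // addnC.
Qed.

Lemma psize_conj : psize (conj_part la) = psize la.
Proof.
rewrite /psize /conj_part /mkseq sumnE big_map.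
have e0 : sumn la = \sum_(k <- iota 0 (size la)) l k.
  by rewrite -[in LHS](mkseq_nth 0 la) sumnE big_map.
rewrite e0.
have e1 : forall j, col_len la j = \sum_(k <- iota 0 (size la)) (j < l k).
  by move=> j; rewrite col_len_nth -sumn_count sumnE big_map.
rewrite (eq_bigr _ (fun j _ => e1 j)) exchange_big /=.
apply: eq_big_seq => k; rewrite mem_iota => hk.
have := @count_lt_iota (l k) (head 0 la) ltac:(rewrite -nth0; exact: part_nth_mono).
by rewrite -sumn_count sumnE big_map.
Qed.

End Conj.

(** * The set T_s *)

Definition repr3 (s n : nat) : Prop :=
  exists k1 k2 k3, n = k1 * s + k2 * s.+1 + k3 * s.+2.

Lemma repr3D s a b : repr3 s a -> repr3 s b -> repr3 s (a + b).
Proof.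
move=> [a1 [a2 [a3 ->]]] [b1 [b2 [b3 ->]]].
by exists (a1 + b1), (a2 + b2), (a3 + b3); lia.
Qed.

Lemma repr3M s t k : t \in [:: s; s.+1; s.+2] -> repr3 s (k * t).
Proof.
rewrite !inE => /or3P [] /eqP ->.
- by exists k, 0, 0; lia.
- by exists 0, k, 0; lia.
- by exists 0, 0, k; lia.
Qed.

Definition top_level (s : nat) : nat := (s - 2) %/ 2.
Definition level_len (s m : nat) : nat := s - 2 * m - 1.

Definition T_seq (s : nat) : seq nat :=
  flatten [seq [seq m * (s + 2) + j | j <- iota 1 (level_len s m)]
          | m <- iota 0 (top_level s).+1].

Lemma top_levelE s : 3 <= s -> s = 2 * top_level s + 2 + odd s.
Proof. by rewrite /top_level => hs; have := modn2 s; case: (odd s) => /=; lia. Qed.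

Lemma mem_T_seq s x : x \in T_seq s <->
  exists m j, [/\ m <= top_level s, 1 <= j, j <= level_len s m & x = m * (s + 2) + j].
Proof.
split.
- move/flattenP=> [t /mapP [m hm ->] /mapP [j hj ->]].
  rewrite mem_iota in hm; rewrite mem_iota in hj.
  by exists m, j; split; lia.
- move=> [m [j [hm hj1 hj2 ->]]].
  apply/flattenP; exists [seq m * (s + 2) + j0 | j0 <- iota 1 (level_len s m)].
  + by apply/mapP; exists m => //; rewrite mem_iota; lia.
  + by apply/mapP; exists j => //; rewrite mem_iota; lia.
Qed.

Lemma mem_T_seq_level s m j :
  m <= top_level s -> 1 <= j <= level_len s m -> m * (s + 2) + j \in T_seq s.
Proof. by move=> hm /andP [hj1 hj2]; apply/mem_T_seq; exists m, j. Qed.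

Lemma repr3_or_T_seq s x : x = 0 \/ repr3 s x \/ x \in T_seq s.
Proof.
set m := x %/ (s + 2); set j := x %% (s + 2).
have hxe : x = m * (s + 2) + j by rewrite /m /j -divn_eq.
have hj : j < s + 2 by rewrite /j ltn_mod addn2.
have [hj0|hj0] := posnP j.
  by right; left; exists 0, 0, m; rewrite hxe hj0; lia.
have [hsj|hsj] := leqP s (2 * m + j); last first.
  by right; right; apply/mem_T_seq; exists m, j; rewrite /top_level /level_len; split; lia.
(* x = (m + 1) s + r with r = 2 q + e <= 2 (m + 1): use q summands s + 2 and
   e summands s + 1. *)
right; left; set r := 2 * m + j - s.
exists (m.+1 - r %/ 2 - r %% 2), (r %% 2), (r %/ 2).
have hr : r = 2 * (r %/ 2) + r %% 2 by lia.
have he : r %% 2 <= 1 by lia.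
have hq : r %/ 2 + r %% 2 <= m.+1 by rewrite /r; lia.
move: hr he hq; set q := r %/ 2; set e := r %% 2 => hr he hq.
rewrite (_ : m.+1 - q - e = m.+1 - (q + e)); last lia.
by rewrite mulnBl hxe; move: hr; rewrite /r; nia.
Qed.

(* A sum of k generators lies in [k s, k (s + 2)]. *)
Lemma T_seq_not_repr3 s x : x \in T_seq s -> ~ repr3 s x.
Proof.
case/mem_T_seq => m [j [hm hj1 hj2 ->]] [k1 [k2 [k3 he]]].
move: hm hj2; rewrite /top_level /level_len => hm hj2.
have [hk|hk] := leqP (k1 + k2 + k3) m.
- have : (k1 + k2 + k3) * (s + 2) <= m * (s + 2) by rewrite leq_mul2r hk orbT.
  lia.
- have : m.+1 * s <= (k1 + k2 + k3) * s by rewrite leq_mul2r hk orbT.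
  lia.
Qed.

Lemma in_T_T_seq s x : in_T s x <-> x \in T_seq s.
Proof.
split=> [[hx hn]|hx].
  by case: (repr3_or_T_seq s x) => [x0|[//|//]]; rewrite x0 in hx.
split; last exact: T_seq_not_repr3.
by case/mem_T_seq: hx => m [j [_ hj _ ->]]; lia.
Qed.

Lemma T_seq_uniq s : uniq (T_seq s).
Proof.
have lev m j : j < s + 2 -> (m * (s + 2) + j) %/ (s + 2) = m.
  by move=> hj; rewrite divnMDl ?divn_small ?addn0 //; lia.
rewrite /T_seq; elim: (top_level s).+1 => [|k IH] //.
rewrite -[k.+1]addn1 iotaD map_cat flatten_cat cat_uniq IH /= cats0.
rewrite map_inj_uniq ?iota_uniq ?andbT; last by move=> a b /= /eqP; rewrite eqn_add2l => /eqP.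
apply/hasPn => x /mapP [j hj ->]; apply/negP => /flattenP [t /mapP [m hm ->] /mapP [j' hj' he]].
rewrite mem_iota /level_len in hj; rewrite mem_iota /level_len in hj'; rewrite mem_iota in hm.
have := lev (0 + k) j; have := lev m j'; rewrite he; lia.
Qed.

Lemma T_seq_max s x : x \in T_seq s ->
  x <= top_level s * (s + 2) + level_len s (top_level s).
Proof.
case/mem_T_seq => m [j [hm hj1 hj2 ->]].
have [h|h] := ltnP m (top_level s); last first.
  by have e : m = top_level s by [lia]; rewrite e in hj2 *; lia.
have : m.+1 * (s + 2) <= top_level s * (s + 2) by rewrite leq_mul2r h orbT.
by rewrite mulSn; rewrite /level_len in hj2 *; lia.
Qed.

Lemma T_seq_max_mem s : 3 <= s ->
  top_level s * (s + 2) + level_len s (top_level s) \in T_seq s.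
Proof.
move=> /top_levelE hs; apply: mem_T_seq_level => //.
by rewrite /level_len; lia.
Qed.

(** * Cores *)

Lemma T_seq_sub_ndvd s b c t : in_T s b -> c < b -> c \notin T_seq s ->
  t \in [:: s; s.+1; s.+2] -> ~~ (t %| b - c).
Proof.
move=> [hb hnb] hcb hc ht; apply/negP => /dvdnP [k hk].
have hbe : b = c + k * t by lia.
move: hnb; rewrite hbe => hnb.
case: (repr3_or_T_seq s c) => [c0|[hrc|hcT]]; last by rewrite hcT in hc.
- by apply: hnb; rewrite c0 add0n; apply: repr3M.
- by apply: hnb; apply: repr3D => //; apply: repr3M.
Qed.

Section Core.
Variables (s : nat) (mu : seq nat).
Hypotheses (s_pos : 0 < s) (mu_core : is_core3 s mu).

Lemma gen_pos t : t \in [:: s; s.+1; s.+2] -> 0 < t.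
Proof. by rewrite !inE => /or3P [] /eqP ->. Qed.

Lemma core_partition : is_partition mu.
Proof. by case/andP: mu_core. Qed.

Lemma core_hook t : t \in [:: s; s.+1; s.+2] -> t \notin hooks mu.
Proof.
move=> ht; apply/negP => hh.
case/andP: mu_core => _ /allP /(_ t hh) /andP [/andP [h1 h2] h3].
by move: ht; rewrite !inE => /or3P [] /eqP he; rewrite he dvdnn in h1 h2 h3.
Qed.

Lemma core_beta_sub b t : b \in beta mu -> t \in [:: s; s.+1; s.+2] -> t <= b ->
  b - t \in beta mu.
Proof.
move=> hb ht htb; apply/negPn/negP => hn.
have hp := core_partition.
case/(mem_betaP hp): hb => i hi hbe.
have : b - t < fhook mu i by rewrite -hbe; have := gen_pos ht; lia.
move=> /(beta_gap_hook hp hn hi); rewrite -hbe (_ : b - (b - t) = t); last lia.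
by move=> hh; move: (core_hook ht); rewrite hh.
Qed.

Lemma core_beta_T b : b \in beta mu -> in_T s b.
Proof.
have hp := core_partition.
elim/ltn_ind: b => b IH hb; split; first exact: (beta_pos hp).
have step t : t \in [:: s; s.+1; s.+2] -> t <= b -> ~ repr3 s (b - t).
  move=> ht htb; have := gen_pos ht.
  by move=> t_pos; apply: (IH (b - t) ltac:(lia) (core_beta_sub hb ht htb)).2.
move=> [k1 [k2 [k3 he]]].
have b_pos := beta_pos hp hb.
have [k1_0|k1_pos] := posnP k1; last first.
  apply: (step s); rewrite ?inE ?eqxx //; first by rewrite he; nia.
  by exists k1.-1, k2, k3; rewrite he; case: k1 k1_pos {he} => // k1 _; rewrite mulSn; lia.
have [k2_0|k2_pos] := posnP k2; last first.
  apply: (step s.+1); rewrite ?inE ?eqxx ?orbT //; first by rewrite he; nia.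
  by exists k1, k2.-1, k3; rewrite he; case: k2 k2_pos {he} => // k2 _; rewrite mulSn; lia.
have [k3_0|k3_pos] := posnP k3; first by move: b_pos; rewrite he k1_0 k2_0 k3_0.
apply: (step s.+2); rewrite ?inE ?eqxx ?orbT //; first by rewrite he; nia.
by exists k1, k2, k3.-1; rewrite he; case: k3 k3_pos {he} => // k3 _; rewrite mulSn; lia.
Qed.

End Core.

(** * Level profiles *)

Definition cnt_in (L : nat) (p : pred nat) : nat := \sum_(j <- iota 1 L | p j) 1.
Definition sum_in (L : nat) (p : pred nat) : nat := \sum_(j <- iota 1 L | p j) j.

Lemma cnt_in0 p : cnt_in 0 p = 0. Proof. by rewrite /cnt_in big_nil. Qed.
Lemma sum_in0 p : sum_in 0 p = 0. Proof. by rewrite /sum_in big_nil. Qed.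

Lemma cnt_inS L p : cnt_in L.+1 p = cnt_in L p + p L.+1.
Proof.
rewrite /cnt_in -[L.+1]addn1 iotaD big_cat /= big_cons big_nil add1n addn1.
by case: (p L.+1).
Qed.

Lemma sum_inS L p : sum_in L.+1 p = sum_in L p + (if p L.+1 then L.+1 else 0).
Proof.
rewrite /sum_in -[L.+1]addn1 iotaD big_cat /= big_cons big_nil add1n addn1.
by case: (p L.+1); rewrite ?addn0.
Qed.

Lemma cnt_in_full L (p : pred nat) : (forall j, 1 <= j <= L -> p j) ->
  cnt_in L p = L /\ 2 * sum_in L p = L * L.+1.
Proof.
elim: L => [|L IH] h; first by rewrite cnt_in0 sum_in0.
have [h1 h2] := IH (fun j hj => h j ltac:(lia)).
rewrite cnt_inS sum_inS h1 (h L.+1) //; last lia.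
by split; [lia | rewrite mulnDr h2; nia].
Qed.

(* The c largest elements of [1, L] sum to c L - c (c - 1) / 2. *)
Lemma sum_in_top L p :
  [/\ cnt_in L p <= L,
      2 * sum_in L p + cnt_in L p * (cnt_in L p).-1 <= 2 * cnt_in L p * L &
      (2 * sum_in L p + cnt_in L p * (cnt_in L p).-1 = 2 * cnt_in L p * L ->
       forall j, 1 <= j <= L -> p j = (L - cnt_in L p < j))].
Proof.
elim: L => [|L [IH1 IH2 IH3]]; first by rewrite cnt_in0 sum_in0; split => // _ j; lia.
rewrite cnt_inS sum_inS; case hp: (p L.+1) => /=.
- split; [lia | nia |] => he j hj.
  have he' : 2 * sum_in L p + cnt_in L p * (cnt_in L p).-1 = 2 * cnt_in L p * L by nia.
  have [hjL|hjL] := ltnP j L.+1.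
  + by rewrite (IH3 he' j ltac:(lia)); apply/idP/idP; lia.
  + by have -> : j = L.+1 by [lia]; rewrite hp; lia.
- rewrite !addn0; split; [lia | nia |] => he.
  have hc0 : cnt_in L p = 0 by nia.
  have he' : 2 * sum_in L p + cnt_in L p * (cnt_in L p).-1 = 2 * cnt_in L p * L by nia.
  move=> j hj; have [hjL|hjL] := ltnP j L.+1.
  + by rewrite (IH3 he' j ltac:(lia)) hc0; apply/idP/idP; lia.
  + by have -> : j = L.+1 by [lia]; rewrite hp; lia.
Qed.

Lemma cnt_in_shift L (p q : pred nat) :
  (forall j, 1 <= j <= L -> p j -> [&& q j, q j.+1 & q j.+2]) ->
  cnt_in L p = 0 \/ cnt_in L p + 2 <= cnt_in L.+2 q.
Proof.
elim: L => [|L IH] H; first by left; rewrite cnt_in0.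
have IH' := IH (fun j hj => H j ltac:(lia)).
rewrite cnt_inS; case hp: (p L.+1) => /=.
- right; move/and3P: (H L.+1 ltac:(lia) hp) => [q1 q2 q3].
  rewrite (cnt_inS L.+2) q3.
  case: IH' => [h0|h]; last lia.
  by rewrite h0 (cnt_inS L.+1) q2 (cnt_inS L) q1; lia.
- rewrite addn0; case: IH' => [h0|h]; first by left.
  by right; rewrite (cnt_inS L.+2); lia.
Qed.

Section Levels.
Variables (s : nat) (X : seq nat).
Hypotheses (X_uniq : uniq X) (X_sub : {subset X <= T_seq s}).

Definition level_cnt m := cnt_in (level_len s m) (fun j => m * (s + 2) + j \in X).
Definition level_sum m := sum_in (level_len s m) (fun j => m * (s + 2) + j \in X).

Lemma big_levels (F : nat -> nat) : \sum_(x <- X) F x =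
  \sum_(0 <= m < (top_level s).+1)
     \sum_(j <- iota 1 (level_len s m) | m * (s + 2) + j \in X) F (m * (s + 2) + j).
Proof.
have hp : perm_eq X [seq x <- T_seq s | x \in X].
  apply: uniq_perm => //; first by rewrite filter_uniq // T_seq_uniq.
  by move=> x; rewrite mem_filter; case hx: (x \in X) => //=; rewrite (X_sub hx).
rewrite (perm_big _ hp) big_filter /T_seq big_flatten big_map /index_iota subn0.
by apply: eq_bigr => m _; rewrite big_map.
Qed.

Lemma size_levels : size X = \sum_(0 <= m < (top_level s).+1) level_cnt m.
Proof. by rewrite -sum1_size big_levels. Qed.

Lemma sumn_levels :
  sumn X = \sum_(0 <= m < (top_level s).+1) (m * (s + 2) * level_cnt m + level_sum m).
Proof.
rewrite sumnE big_levels; apply: eq_bigr => m _.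
rewrite /level_cnt /level_sum /cnt_in /sum_in big_distrr -big_split; apply: eq_bigr => j _ /=.
by rewrite muln1.
Qed.

End Levels.

Lemma level_cnt_T_seq s m : m <= top_level s ->
  level_cnt s (T_seq s) m = level_len s m /\
  2 * level_sum s (T_seq s) m = level_len s m * (level_len s m).+1.
Proof. by move=> hm; apply: cnt_in_full => j; apply: mem_T_seq_level. Qed.

(* Chebyshev's sum inequality on [1, K), where the weights m (2 K + e + 2) + 1
   have mean at least K (K + e); the term m = 0 vanishes. *)
Lemma chebyshev_shift K e (d : nat -> nat) : e <= 1 -> d 0 = 0 ->
  (forall i j, i <= j -> j < K -> d i <= d j) ->
  K * (K + e) * \sum_(0 <= m < K) d m
    <= (2 * K + e + 2) * \sum_(0 <= m < K) m * d m + \sum_(0 <= m < K) d m.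
Proof.
move=> he d0 hd.
have [hK1|hK1] := ltnP 1 K; last first.
  by case: K hK1 hd => [|[|//]] _ _; rewrite ?big_nat1 ?big_geq // d0; lia.
have -> : (2 * K + e + 2) * \sum_(0 <= m < K) m * d m + \sum_(0 <= m < K) d m =
          \sum_(0 <= m < K) (m * (2 * K + e + 2) + 1) * d m.
  by rewrite big_distrr -big_split; apply: eq_big_nat => i _ /=; nia.
rewrite big_ltn 1?[X in _ <= X]big_ltn; try lia.
rewrite d0 !muln0 !add0n -(add0n 1) !big_addn.
have := @chebyshev_sum (K - 1) (fun i => (i + 1) * (2 * K + e + 2) + 1) (fun i => d (i + 1))
  (fun i j h1 _ => ltac:(by rewrite /= leq_add2r leq_mul2r leq_add2r h1 orbT))
  (fun i j h1 h2 => hd (i + 1) (j + 1) ltac:(lia) ltac:(lia)).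
set Sg := \sum_(0 <= i < K - 1) _; set Sd := \sum_(0 <= i < K - 1) d (i + 1).
set Sgd := \sum_(0 <= i < K - 1) _ => hc.
have eSg : 2 * Sg = (2 * K + e + 2) * ((K - 1) * K) + 2 * (K - 1).
  rewrite /Sg (eq_big_nat _ _ (F2 := fun i => (2 * K + e + 2) * (i + 1) + 1)); last first.
    by move=> i _; nia.
  rewrite big_split /= -big_distrr /= sum_nat_const_nat subn0.
  suff : 2 * \sum_(0 <= i < K - 1) (i + 1) = (K - 1) * K by nia.
  rewrite big_split /= sum_nat_const_nat subn0 mulnDr double_sum_id.
  by case: K hK1 {hc Sg Sd Sgd hd} => //= K _; nia.
have : (K - 1) * (K * (K + e) * Sd) <= (K - 1) * Sgd.
  by apply: leq_trans hc; rewrite mulnA; apply: leq_mul => //; nia.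
by rewrite leq_mul2l; case/orP => // /eqP; lia.
Qed.

(* The slack terms on the left force equality in deficit_bound_full to be
   attained only by b = 0, or b = 1 when e = 1. *)
Lemma deficit_slack_full (K e : nat) (b : nat -> nat) : 1 <= K -> e <= 1 ->
  (forall i j, i <= j -> j < K -> b i <= b j) ->
  2 * (K * (K + e)) * (\sum_(0 <= m < K) b m)
    + (\sum_(0 <= m < K) (b m - b 0) * (b m - b 0)) + K * K.+1 * (b 0 * (b 0 - e))
    <= 2 * (2 * K + e + 2) * (\sum_(0 <= m < K) m * b m) + (\sum_(0 <= m < K) b m * b m)
       + 2 * (\sum_(0 <= m < K) b m) + (\sum_(0 <= m < K) b m) * (\sum_(0 <= m < K) b m).
Proof.
move=> hK he hb.
set c := b 0; set d := fun m => b m - c.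
have hbd m : m < K -> b m = c + d m.
  by move=> hm; rewrite /d /c; have := hb 0 m (leq0n _) hm; lia.
have hch := @chebyshev_shift K e d he (subnn _) (fun i j h1 h2 => ltac:(
  rewrite /d; have := hb i j h1 h2; lia)).
set SD := \sum_(0 <= m < K) d m in hch *.
set SD2 := \sum_(0 <= m < K) d m * d m.
set SMD := \sum_(0 <= m < K) m * d m in hch *.
have -> : \sum_(0 <= m < K) b m = K * c + SD.
  rewrite (eq_big_nat _ _ (F2 := fun m => c + d m)); last by move=> i hi; apply: hbd; lia.
  by rewrite big_split /= sum_nat_const_nat subn0.
have -> : \sum_(0 <= m < K) b m * b m = K * (c * c) + 2 * c * SD + SD2.
  rewrite (eq_big_nat _ _ (F2 := fun m => c * c + 2 * c * d m + d m * d m)); last first.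
    by move=> i hi; rewrite (hbd i) ?ltnS; try lia; nia.
  by rewrite !big_split /= sum_nat_const_nat subn0 -big_distrr.
have -> : 2 * (2 * K + e + 2) * (\sum_(0 <= m < K) m * b m) =
          (2 * K + e + 2) * (c * (K * K.-1) + 2 * SMD).
  rewrite -mulnA mulnCA; congr (_ * _).
  rewrite (eq_big_nat _ _ (F2 := fun m => c * m + m * d m)); last first.
    by move=> i hi; rewrite (hbd i) ?ltnS; try lia; nia.
  by rewrite big_split /= -big_distrr /= mulnDr mulnCA double_sum_id.
move: hch; clearbody c d SD SD2 SMD; clear hbd hb.
by case: K hK => // K _; case: c => [|c]; case: e he => [|[|//]] _ /= hch; nia.
Qed.

Lemma deficit_bound_full (K e : nat) (b : nat -> nat) : 1 <= K -> e <= 1 ->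
  (forall i j, i <= j -> j < K -> b i <= b j) ->
  let SB := \sum_(0 <= m < K) b m in
  let rhs := 2 * (2 * K + e + 2) * (\sum_(0 <= m < K) m * b m)
             + (\sum_(0 <= m < K) b m * b m) + 2 * SB + SB * SB in
  2 * (K * (K + e)) * SB <= rhs /\
  (2 * (K * (K + e)) * SB = rhs ->
   (forall m, m < K -> b m = 0) \/ (e = 1 /\ forall m, m < K -> b m = 1)).
Proof.
move=> hK he hb SB rhs; have := deficit_slack_full hK he hb; rewrite -/SB -/rhs.
set SD2 := \sum_(0 <= m < K) _; set c := b 0 => hslack.
split=> [|heq]; first by apply: leq_trans hslack; rewrite -addnA leq_addr.
have : SD2 + K * K.+1 * (c * (c - e)) = 0.
  by move: hslack; rewrite heq; clearbody rhs SD2 c; lia.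
move=> /eqP; rewrite addn_eq0 => /andP [/eqP hSD2 hc].
have hcc : c * (c - e) = 0.
  by move/eqP: hc; move: hK; clear; case: K => // K _; nia.
have hbc m : m < K -> b m = c.
  move=> hm; have : (b m - c) * (b m - c) <= SD2.
    exact: (leq_sum_term (fun i => (b i - c) * (b i - c))).
  by rewrite hSD2; have := hb 0 m (leq0n _) hm; rewrite -/c; nia.
have [c0|c_pos] := posnP c; first by left => m /hbc ->.
have [e1 c1] : e = 1 /\ c = 1.
  by move: hcc he c_pos; clearbody c; clear; case: e => [|[|//]] /=; nia.
by right; split => // m /hbc ->.
Qed.

Lemma deficit_bound_partial s K (b : nat -> nat) : 2 * K <= s ->
  (forall i j, i <= j -> j < K -> b i <= b j) ->
  8 * (K * (s - K)) * (\sum_(0 <= m < K) b m)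
    <= 4 * (2 * (s + 2) * (\sum_(0 <= m < K) m * b m) + (\sum_(0 <= m < K) b m * b m)
            + 2 * (\sum_(0 <= m < K) b m)
            + (\sum_(0 <= m < K) b m) * (\sum_(0 <= m < K) b m))
       + K * K.+1 * ((s - 2 * K) * (s - 2 * K)).
Proof.
move=> hsK hb; set u := s - 2 * K.
set SB := \sum_(0 <= m < K) b m; set SB2 := \sum_(0 <= m < K) b m * b m.
set SMB := \sum_(0 <= m < K) m * b m.
have cheb : 2 * (K * (s - K)) * SB <= 2 * (s + 2) * SMB + (2 + K.+1 * u) * SB.
  have [K0|hK0] := posnP K; first by rewrite /SB K0 big_geq.
  have := @chebyshev_sum K (fun m => 2 * (m * (s + 2)) + 2 + K.+1 * u) b
    (fun i j h1 _ => ltac:(by rewrite !leq_add2r leq_mul2l leq_mul2r h1 !orbT)) hb.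
  have -> : \sum_(0 <= m < K) (2 * (m * (s + 2)) + 2 + K.+1 * u) = 2 * K * (K * (s - K)).
    rewrite (eq_big_nat _ _ (F2 := fun m => (s + 2) * (2 * m) + (2 + K.+1 * u))); last first.
      by move=> i _; nia.
    rewrite big_split /= -!big_distrr /= double_sum_id sum_nat_const_nat subn0 /u.
    have [t ->] : exists t, s = 2 * K + t by exists (s - 2 * K); lia.
    by move: hK0; clear; case: K => // K _; rewrite /=; nia.
  have -> : \sum_(0 <= m < K) (2 * (m * (s + 2)) + 2 + K.+1 * u) * b m
              = 2 * (s + 2) * SMB + (2 + K.+1 * u) * SB.
    by rewrite /SMB /SB !big_distrr -big_split; apply: eq_big_nat => i _ /=; nia.
  move=> hc; rewrite -(leq_pmul2l hK0); apply: leq_trans hc.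
  by rewrite !mulnA [K * 2]mulnC.
have amgm_sum : 4 * u * SB <= 4 * SB2 + K * (u * u).
  have : \sum_(0 <= m < K) 4 * u * b m <= \sum_(0 <= m < K) (4 * (b m * b m) + u * u).
    by apply: leq_sum_nat => i _; rewrite mulnAC; exact: amgm4.
  by rewrite big_split /= -!big_distrr /= sum_nat_const_nat subn0 [u * (K * u)]mulnCA.
have amgm_total : 4 * K * u * SB <= 4 * (SB * SB) + K * K * (u * u).
  by have := amgm4 SB (K * u); nia.
nia.
Qed.

Lemma sum_level_len s K : 2 * K <= s -> \sum_(0 <= m < K) level_len s m = K * (s - K).
Proof.
elim: K => [|K IH] hK; first by rewrite big_geq.
by rewrite big_nat_recr //= IH /level_len; [nia | lia].
Qed.

(* The number of elements, and twice the sum of the elements, of T_s on the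
   levels >= k. *)
Definition tail_len s k := \sum_(k <= m < (top_level s).+1) level_len s m.
Definition tail_weight s k := \sum_(k <= m < (top_level s).+1)
  (2 * (m * (s + 2)) * level_len s m + level_len s m * (level_len s m).+1).

Lemma tail_bounds s k : 3 <= s -> k <= (top_level s).+1 ->
  2 * (k * (s - k)) * tail_len s k + tail_len s k * tail_len s k
    + 2 * (k.+1 * k.+1) * tail_len s k <= tail_weight s k + tail_len s k /\
  (s - 2 * k) * (s - 2 * k) <= 4 * tail_len s k + 1.
Proof.
move=> hs; have hsM := top_levelE hs; set M := top_level s in hsM *.
move=> hk; have [d hd] : exists d, k + d = M.+1 by exists (M.+1 - k); lia.
elim: d k hk hd => [|d IH] k hk hd.
  have hMk : M.+1 <= k by lia.
  rewrite /tail_len /tail_weight -/M !(big_geq hMk).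
  by split; [lia | case: (odd s) hsM => /= hsM; nia].
have [IH1 IH2] := IH k.+1 ltac:(lia) ltac:(lia).
have hkM : k < M.+1 by lia.
move: IH1 IH2; rewrite /tail_len /tail_weight -/M !(big_ltn hkM).
set A := \sum_(k.+1 <= m < M.+1) _; set La := \sum_(k.+1 <= m < M.+1) _.
rewrite /level_len.
have hL : 1 <= s - 2 * k - 1 by lia.
set L := s - 2 * k - 1 in hL *.
have -> : s = L + 2 * k + 1 by rewrite /L; lia.
have -> : L + 2 * k + 1 - k = L + k + 1 by lia.
have -> : L + 2 * k + 1 - k.+1 = L + k by lia.
have -> : L + 2 * k + 1 - 2 * k = L + 1 by lia.
have -> : L + 2 * k + 1 - 2 * k.+1 = L - 1 by lia.
by move=> IH1 IH2; clear -IH1 IH2 hL; split; nia.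
Qed.

(* Twice the sum of the subset of T_s having n m elements on each level m,
   placed at the top of the level, plus \sum_m n m (n m - 1). *)
Definition top_fill_weight s (n : nat -> nat) := \sum_(0 <= m < (top_level s).+1)
  (2 * (m * (s + 2)) * n m + 2 * n m * level_len s m).

Section Profile.
Variables (s : nat) (n : nat -> nat).
Hypotheses (hs : 3 <= s)
  (n_le : forall m, m <= top_level s -> n m <= level_len s m)
  (n_drop : forall m, 0 < m -> m <= top_level s -> 0 < n m -> n m + 2 <= n m.-1).

Local Notation M := (top_level s).
Local Notation L := (level_len s).

Let K := count (fun m => 0 < n m) (iota 0 M.+1).
Let b m := L m - n m.

Lemma nonempty_levels m : m < M.+1 -> (m < K) = (0 < n m).
Proof.
apply: count_iota_prefix => k k'; elim: k' => [|k' IH] hkk' hk' hn.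
  by have -> : k = 0 by lia.
have [hk|hk] := ltnP k k'.+1; last by have -> : k = k'.+1 by lia.
by apply: IH; [lia | lia | have := @n_drop k'.+1 ltac:(lia) ltac:(lia) hn; rewrite /=; lia].
Qed.

Lemma nonempty_levels_le : K <= M.+1.
Proof. by rewrite -[M.+1](size_iota 0) count_size. Qed.

Lemma deficit_mono i j : i <= j -> j < K -> b i <= b j.
Proof.
have hKM := nonempty_levels_le.
have step m : 0 < m -> m < K -> b m.-1 <= b m.
  move=> m0 hm; have := @n_drop m m0 ltac:(lia); rewrite -nonempty_levels ?hm; last lia.
  move=> /(_ isT); have := @n_le m ltac:(lia); have := @n_le m.-1 ltac:(lia).
  by rewrite /b /level_len; lia.
elim: j => [|j IH] hij hj; first by have -> : i = 0 by lia.
have [hi|hi] := ltnP i j.+1; last by have -> : i = j.+1 by lia.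
exact: leq_trans (IH ltac:(lia) ltac:(lia)) (step j.+1 _ hj).
Qed.

Let Nk := \sum_(0 <= m < K) n m.
Let SB := \sum_(0 <= m < K) b m.
Let SB2 := \sum_(0 <= m < K) b m * b m.
Let SMB := \sum_(0 <= m < K) m * b m.
Let SRl := \sum_(0 <= m < K) (2 * (m * (s + 2)) * n m + 2 * n m * L m).
Let STl := \sum_(0 <= m < K) (2 * (m * (s + 2)) * L m + L m * (L m).+1).
Let SNl := \sum_(0 <= m < K) n m * (n m).-1.

Lemma profile_count : Nk + SB = K * (s - K).
Proof.
have hK := nonempty_levels_le; have hsM := top_levelE hs.
rewrite -sum_level_len; last lia.
rewrite /Nk /SB -big_split; apply: eq_big_nat => i hi /=.
by have := @n_le i ltac:(lia); rewrite /b; lia.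
Qed.

Lemma profile_identity : STl + SNl = SRl + (2 * (s + 2) * SMB + SB2) + SB.
Proof.
have hK := nonempty_levels_le.
rewrite addnA /STl /SNl /SRl /SMB /SB2 /SB -big_split big_distrr -!big_split.
apply: eq_big_nat => i hi /=; have := @n_le i ltac:(lia); rewrite /b.
move: (n i) (L i) => x l hx; have [y ->] : exists y, l = x + y by exists (l - x); lia.
by rewrite addKn; case: x {hx} => [|x] /=; nia.
Qed.

Lemma empty_levels m : K <= m < M.+1 -> n m = 0.
Proof. by case/andP=> h1 h2; move: (nonempty_levels h2); rewrite ltnNge h1 /=; lia. Qed.

Let N := \sum_(0 <= m < M.+1) n m.
Let lhs := top_fill_weight s n + tail_len s 0 * (tail_len s 0).-1.
Let rhs := tail_weight s 0 + N * N.-1 + \sum_(0 <= m < M.+1) n m * (n m).-1.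

Lemma profile_lhsE : lhs = SRl + (Nk + SB + tail_len s K) * (Nk + SB + tail_len s K).-1.
Proof.
have hK := nonempty_levels_le; have hsK : 2 * K <= s by have := top_levelE hs; lia.
rewrite /lhs /top_fill_weight /tail_len !(big_cat_nat (leq0n K) hK) /=.
rewrite (sum_level_len hsK) -profile_count [X in _ + X + _]big_nat_eq0 ?addn0 //.
by move=> i /empty_levels ->; rewrite !muln0.
Qed.

Lemma profile_rhsE : rhs = STl + tail_weight s K + Nk * Nk.-1 + SNl.
Proof.
have hK := nonempty_levels_le.
have z_cnt : \sum_(K <= m < M.+1) n m = 0 by apply: big_nat_eq0 => i /empty_levels.
have z_pair : \sum_(K <= m < M.+1) n m * (n m).-1 = 0.
  by apply: big_nat_eq0 => i /empty_levels ->.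
rewrite /rhs /N /tail_weight !(big_cat_nat (leq0n K) hK) /= z_cnt z_pair !addn0.
by rewrite -!addnA; congr (_ + _); rewrite addnCA.
Qed.

Lemma profile_ineq_partial : K < M.+1 -> lhs < rhs.
Proof.
move=> hKM; have hK := nonempty_levels_le; have hsM := top_levelE hs.
have hsK : 2 * K <= s by lia.
have ident := profile_identity; have cnt := profile_count.
have [t1 t2] := tail_bounds hs hK; rewrite -cnt in t1.
have := deficit_bound_partial hsK deficit_mono; rewrite -/SB -/SB2 -/SMB -cnt => hD.
have hu : 2 <= s - 2 * K by lia.
move: t1 t2 hu hD; set u := s - 2 * K; set La := tail_len s K => t1 t2 hu hD.
have h8 : K.+1 * K.+1 * (u * u) <= K.+1 * K.+1 * (4 * La + 1) by rewrite leq_mul2l t2 orbT.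
have h9 : 4 * (K.+1 * K.+2) <= K.+1 * K.+2 * (u * u).
  by rewrite mulnC leq_mul2l (leq_mul hu hu) orbT.
rewrite profile_lhsE profile_rhsE !muln_pred -/La.
have := leq_square (Nk + SB + La); have := leq_square Nk.
move: ident t1 h8 h9 hD; set STt := tail_weight s K.
by clearbody Nk SB SB2 SMB SRl STl SNl La STt u; clear; lia.
Qed.

Lemma profile_ineq_full : K = M.+1 ->
  lhs <= rhs /\
  (lhs = rhs -> (forall m, m <= M -> n m = L m) \/
                (odd s /\ forall m, m <= M -> n m = (L m).-1)).
Proof.
move=> eK; have hsM := top_levelE hs; have ident := profile_identity.
have [La0 STt0] : tail_len s K = 0 /\ tail_weight s K = 0.
  by rewrite /tail_len /tail_weight !big_geq ?eK.
have := deficit_bound_full (K := K) (e := odd s) (b := b) ltac:(lia) (leq_b1 _) deficit_mono.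
rewrite -/SB -/SB2 -/SMB (_ : K * (K + odd s) = Nk + SB); last first.
  by rewrite profile_count; congr (_ * _); lia.
rewrite (_ : 2 * K + odd s = s); last lia.
have balance : rhs + 2 * (Nk + SB) * SB = lhs + (2 * (s + 2) * SMB + SB2 + 2 * SB + SB * SB).
  rewrite profile_lhsE profile_rhsE La0 STt0 !addn0 !muln_pred.
  have := leq_square (Nk + SB); have := leq_square Nk.
  by move: ident; clearbody Nk SB SB2 SMB SRl STl SNl; clear; nia.
case=> hle heq; split=> [|eq]; first by lia.
have hn m : m <= M -> n m = L m - b m by move=> hm; have := @n_le m hm; rewrite /b; lia.
case: (heq ltac:(lia)) => [b0|[ho b1]]; first by left=> m hm; rewrite hn ?b0 ?subn0; lia.
right; split; first by case: (odd s) ho.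
by move=> m hm; rewrite hn // b1 ?subn1; lia.
Qed.

Lemma profile_ineq :
  lhs <= rhs /\
  (lhs = rhs -> (forall m, m <= M -> n m = L m) \/
                (odd s /\ forall m, m <= M -> n m = (L m).-1)).
Proof.
have [hKM|hKM] := ltnP K M.+1; last by apply: profile_ineq_full; have := nonempty_levels_le; lia.
have lt := profile_ineq_partial hKM.
by split=> [|eq]; [exact: ltnW | rewrite eq ltnn in lt].
Qed.

End Profile.

Lemma size_T_seq s : size (T_seq s) = tail_len s 0.
Proof.
rewrite (size_levels (T_seq_uniq s) (fun x h => h)); apply: eq_big_nat => m hm.
by case: (@level_cnt_T_seq s m ltac:(lia)).
Qed.

Lemma sumn_T_seq s : 2 * sumn (T_seq s) = tail_weight s 0.
Proof.
rewrite (sumn_levels (T_seq_uniq s) (fun x h => h)) big_distrr; apply: eq_big_nat => m hm /=.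
by case: (@level_cnt_T_seq s m ltac:(lia)) => h1 h2; rewrite mulnDr h1 h2; lia.
Qed.

Definition gen_closed s (X : seq nat) :=
  forall x t, x \in X -> t \in [:: s; s.+1; s.+2] -> t < x -> x - t \in X.

Definition T_trim s := [pred x | (x \in T_seq s) && (2 <= x %% (s + 2))].

Section Closed.
Variables (s : nat) (X : seq nat).
Hypotheses (hs : 3 <= s) (X_uniq : uniq X) (X_sub : {subset X <= T_seq s})
  (X_closed : gen_closed s X).

Local Notation M := (top_level s).
Local Notation L := (level_len s).
Local Notation n := (level_cnt s X).
Local Notation in_level m := (fun j => m * (s + 2) + j \in X).

Lemma level_cnt_le m : n m <= L m.
Proof. by case: (sum_in_top (L m) (in_level m)). Qed.

(* x = (m + 1) (s + 2) + j in X forces the positions j, j + 1, j + 2 of level m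
   into X, namely x - (s + 2), x - (s + 1) and x - s. *)
Lemma level_cnt_drop m : 0 < m -> m <= M -> 0 < n m -> n m + 2 <= n m.-1.
Proof.
case: m => // m _ hm hn.
have hL : L m = (L m.+1).+2 by rewrite /level_len; have := top_levelE hs; lia.
have shift j : 1 <= j <= L m.+1 -> in_level m.+1 j ->
    [&& in_level m j, in_level m j.+1 & in_level m j.+2].
  move=> hj hx; rewrite /= mulSn in hx.
  have sub t : t \in [:: s; s.+1; s.+2] -> s + 2 + m * (s + 2) + j - t \in X.
    move=> ht; have : t <= s.+2 by move: ht; rewrite !inE => /or3P [] /eqP ->; lia.
    by move=> t_le; apply: (X_closed hx ht); lia.
  rewrite (_ : m * (s + 2) + j = s + 2 + m * (s + 2) + j - s.+2); last lia.
  rewrite (_ : m * (s + 2) + j.+1 = s + 2 + m * (s + 2) + j - s.+1); last lia.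
  rewrite (_ : m * (s + 2) + j.+2 = s + 2 + m * (s + 2) + j - s); last lia.
  by rewrite !sub ?inE ?eqxx ?orbT.
case: (cnt_in_shift shift) => [h0|]; last by rewrite /level_cnt hL.
by move: hn; rewrite /level_cnt h0.
Qed.

Lemma level_sum_le m : 2 * level_sum s X m + n m * (n m).-1 <= 2 * n m * L m.
Proof. by case: (sum_in_top (L m) (in_level m)). Qed.

Lemma closed_sum_le :
  2 * sumn X + \sum_(0 <= m < M.+1) n m * (n m).-1 <= top_fill_weight s n.
Proof.
rewrite (sumn_levels X_uniq X_sub) big_distrr -big_split; apply: leq_sum_nat => m _ /=.
by have := level_sum_le m; lia.
Qed.

Lemma closed_sum_eq :
  2 * sumn X + \sum_(0 <= m < M.+1) n m * (n m).-1 = top_fill_weight s n ->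
  forall m j, m <= M -> 1 <= j <= L m -> (m * (s + 2) + j \in X) = (L m - n m < j).
Proof.
rewrite (sumn_levels X_uniq X_sub) big_distrr -big_split => heq m j hm hj.
have hle i : 0 <= i < M.+1 ->
    2 * (i * (s + 2) * n i + level_sum s X i) + n i * (n i).-1
    <= 2 * (i * (s + 2)) * n i + 2 * n i * L i.
  by move=> _; have := level_sum_le i; lia.
have := leq_sum_nat_eq hle heq (_ : 0 <= m < M.+1); rewrite /= ltnS hm => /(_ isT) eqm.
case: (sum_in_top (L m) (in_level m)) => _ _; apply=> //.
by move: eqm; rewrite /level_cnt /level_sum; lia.
Qed.

Lemma closed_weight_bound :
  let lhs := 2 * sumn X + size (T_seq s) * (size (T_seq s)).-1 in
  let rhs := 2 * sumn (T_seq s) + size X * (size X).-1 in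
  lhs <= rhs /\ (lhs = rhs -> X =i T_seq s \/ (odd s /\ X =i T_trim s)).
Proof.
move=> lhs rhs.
have := profile_ineq hs (fun m _ => level_cnt_le m) level_cnt_drop.
rewrite /= -size_T_seq -sumn_T_seq -(size_levels X_uniq X_sub) => -[ineq eqcase].
have hw := closed_sum_le; split=> [|heq]; first by rewrite /lhs /rhs; lia.
have fill := closed_sum_eq ltac:(rewrite /lhs /rhs in heq; lia).
have hL m : m <= M -> 1 <= L m by move=> hm; rewrite /level_len; have := top_levelE hs; lia.
have lev_mod m j : j <= L m -> (m * (s + 2) + j) %% (s + 2) = j.
  move=> hj; have hjs : j < s + 2 by move: hj; rewrite /level_len; lia.
  by rewrite modnMDl modn_small.
case: (eqcase ltac:(rewrite /lhs /rhs in heq; lia)) => [full|[odd_s trim]].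
  left => x; apply/idP/idP => [/X_sub //|/mem_T_seq [m [j [hm hj1 hj2 ->]]]].
  by rewrite fill ?full ?subnn //; apply/andP.
right; split=> // x; rewrite inE; apply/idP/andP => [hx|[]].
  have hT := X_sub hx; split=> //.
  case/mem_T_seq: hT hx => m [j [hm hj1 hj2 ->]] hx.
  move: hx; rewrite fill ?trim ?lev_mod //; last by apply/andP.
  by have := hL m hm; lia.
case/mem_T_seq => m [j [hm hj1 hj2 ->]]; rewrite lev_mod // => hj.
by rewrite fill ?trim //; [have := hL m hm; lia | apply/andP].
Qed.

End Closed.

(** * Maximal cores *)

Lemma beta_uniq la : is_partition la -> uniq (beta la).
Proof.
move/beta_sorted; apply: sorted_uniq; last exact: ltnn.
by move=> a b c h1 h2; apply: ltn_trans h2 h1.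
Qed.

Lemma conj_core s la : is_core3 s la -> is_core3 s (conj_part la).
Proof.
move=> hla; have hp := core_partition hla.
apply/andP; split; first exact: conj_partition.
by apply/allP => h /(hooks_conj hp) hh; case/andP: hla => _ /allP; apply.
Qed.

Lemma T_partition_exists s : exists ka, is_partition ka /\ beta ka =i T_seq s.
Proof.
set b := sort geq (undup (T_seq s)).
have b_sorted : sorted gtn b.
  rewrite gtn_sorted_uniq_geq sort_uniq undup_uniq /=.
  by apply: sort_sorted => x y; rewrite /geq /= orbC leq_total.
have mem_b x : (x \in b) = (x \in T_seq s) by rewrite mem_sort mem_undup.
have b_pos : all (fun x => 0 < x) b.
  by apply/allP => x; rewrite mem_b => /in_T_T_seq [].
have [ka [hka hb]] := beta_exists b_sorted b_pos.
by exists ka; split=> // x; rewrite hb mem_b.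
Qed.

Section Kappa.
Variables (s : nat) (ka : seq nat).
Hypotheses (hs : 3 <= s) (ka_part : is_partition ka) (ka_beta : beta ka =i T_seq s).

Lemma kappa_core : is_core3 s ka.
Proof.
apply/andP; split => //; apply/allP => h hh.
have [i [c [hi hc hcn ->]]] := hook_beta_gap ka_part hh.
have hT : in_T s (fhook ka i).
  by apply/in_T_T_seq; rewrite -ka_beta; apply/(mem_betaP ka_part); exists i.
have hcT : c \notin T_seq s by rewrite -ka_beta.
have ndvd t := @T_seq_sub_ndvd s _ c t hT hc hcT.
by rewrite !ndvd ?inE ?eqxx ?orbT.
Qed.

Lemma kappa_unique mu : is_partition mu -> beta mu =i T_seq s -> mu = ka.
Proof. by move=> hmu he; apply: beta_inj => // x; rewrite he ka_beta. Qed.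

Lemma core_psize_le mu : is_core3 s mu ->
  psize mu <= psize ka /\
  (psize mu = psize ka -> beta mu =i T_seq s \/ (odd s /\ beta mu =i T_trim s)).
Proof.
move=> hmu; have hp := core_partition hmu.
have hperm : perm_eq (beta ka) (T_seq s) by apply: uniq_perm; rewrite ?beta_uniq ?T_seq_uniq.
have hka := psize_beta ka_part; rewrite -(size_beta ka) (perm_size hperm) (perm_sumn hperm) in hka.
have hmu_sz := psize_beta hp; rewrite -(size_beta mu) in hmu_sz.
have [] := closed_weight_bound hs (beta_uniq hp)
  (fun x hx => proj1 (in_T_T_seq s x) (core_beta_T (ltnW (ltnW hs)) hmu hx))
  (fun x t hx ht htx => core_beta_sub (ltnW (ltnW hs)) hmu hx ht (ltnW htx)).
move: hka hmu_sz; rewrite /=.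
move: (size (beta mu) * _) (size (T_seq s) * _) => A B hka hmu_sz ineq eqcase.
by split=> [|he]; [lia | apply: eqcase; lia].
Qed.

(* For odd s = 2 M + 3, kappa_s has length |T_s| = (M + 1) (M + 2) but first
   part max T_s - |T_s| + 1 = (M + 1)^2. *)
Lemma kappa_not_selfconj : odd s -> conj_part ka <> ka.
Proof.
move=> odd_s hc.
have hs1 : size ka = head 0 ka by rewrite -{1}hc size_conj.
have hn : size ka = size (T_seq s).
  rewrite -(size_beta ka); apply: perm_size; apply: uniq_perm; rewrite ?beta_uniq ?T_seq_uniq //.
have := top_levelE hs; rewrite odd_s /=; set M := top_level s => hM.
have hTs : size (T_seq s) = M.+1 * (s - M.+1) by rewrite size_T_seq /tail_len sum_level_len; lia.
have hb0 : fhook ka 0 = M * (s + 2) + level_len s M.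
  apply/eqP; rewrite eqn_leq; apply/andP; split.
    apply: T_seq_max; rewrite -ka_beta; apply/(mem_betaP ka_part).
    by exists 0 => //; rewrite hn hTs; lia.
  have : M * (s + 2) + level_len s M \in beta ka by rewrite ka_beta T_seq_max_mem.
  by case/(mem_betaP ka_part) => i hi ->; have := fhook_dec ka_part (leq0n i) hi; lia.
by move: hb0; rewrite /fhook nth0 -hs1 hn hTs /level_len subn0; nia.
Qed.

End Kappa.

Theorem theorem3p4 (s : nat) (hs : 3 <= s) :
  (exists ka : seq nat, is_partition ka /\ forall n, n \in beta ka <-> in_T s n) /\
  (forall ka : seq nat, is_partition ka -> (forall n, n \in beta ka <-> in_T s n) ->
    [/\ is_core3 s ka,
        (forall mu, is_core3 s mu -> psize mu <= psize ka),
        (~~ odd s ->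
           conj_part ka = ka /\
           (forall mu, is_core3 s mu -> psize mu = psize ka -> mu = ka))
      & (odd s ->
           conj_part ka <> ka /\
           (forall mu, is_core3 s mu ->
              (psize mu = psize ka <-> mu = ka \/ mu = conj_part ka)))]).
Proof.
have beta_T ka : (forall n, n \in beta ka <-> in_T s n) <-> beta ka =i T_seq s.
  split=> h n; last by rewrite h; exact: iff_sym (in_T_T_seq s n).
  by apply/idP/idP => hn; [apply/in_T_T_seq/h | apply/h/in_T_T_seq].
split=> [|ka hka /beta_T hb].
  by have [ka [hka hb]] := T_partition_exists s; exists ka; split; last exact/beta_T.
have hcore := kappa_core hka hb.
have hmax := core_psize_le hs hka hb.
have conj_max : psize (conj_part ka) = psize ka := psize_conj hka.
split=> // [mu /hmax [] //|even_s|odd_s].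
  have max_unique mu : is_core3 s mu -> psize mu = psize ka -> mu = ka.
    move=> hmu /(hmax mu hmu).2 [hT|[odd_s _]]; last by rewrite odd_s in even_s.
    exact: (kappa_unique hka hb (core_partition hmu) hT).
  by split; [apply: max_unique (conj_core hcore) conj_max | exact: max_unique].
have not_selfconj := kappa_not_selfconj hs hka hb odd_s.
split=> // mu hmu; split=> [/(hmax mu hmu).2 [hT|[_ hD]]|[] ->] //.
  by left; exact: (kappa_unique hka hb (core_partition hmu) hT).
right; have [hT'|[_ hD']] := (hmax _ (conj_core hcore)).2 conj_max.
  by have := kappa_unique hka hb (conj_partition hka) hT'.
by apply: beta_inj (core_partition hmu) (conj_partition hka) _ => x; rewrite hD hD'.
Qed.
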